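(* Let $(\mathcal{C},V^-,\iota)$ be a pre-Clifford modular tensor category and let $X$ be a simple object with $V^-\boxtimes X\cong X$. Then there exists an isomorphism $\vartheta:V^-\boxtimes X\to X$ such that $-\vartheta\circ(\mathrm{Id}_{V^-}\boxtimes\vartheta)=\lambda_X\circ(\iota\boxtimes\mathrm{Id}_X)$ as maps $V^-\boxtimes V^-\boxtimes X\to X$, where $\lambda_X:1\boxtimes X\to X$ is the unit isomorphism.
   Context: A modular tensor category $\mathcal{C}$ is a semisimple ribbon category over $\mathbb{C}$ with finitely many isomorphism classes of simple objects and nondegenerate $s$-matrix, with tensor product $\boxtimes$, unit object $1$, braiding $\sigma_{X,Y}:X\boxtimes Y\to Y\boxtimes X$ and twist $\theta_X$ satisfying $\theta_{X\boxtimes Y}=\sigma_{Y,X}\sigma_{X,Y}(\theta_X\boxtimes\theta_Y)$. A pre-Clifford modular tensor category is a modular tensor category $\mathcal{C}$ together with an object $V^-$ and an isomorphism $\iota:V^-\boxtimes V^-\xrightarrow{\cong}1$ such that $\theta_{V^-}=-\mathrm{Id}_{V^-}$. *)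

From HB Require Import structures.
From mathcomp Require Import all_boot all_order all_algebra.
From mathcomp Require Import complex.
From mathcomp Require Import reals.
Set Implicit Arguments. Unset Strict Implicit. Unset Printing Implicit Defensive.
Import Order.TTheory GRing.Theory Num.Theory.
Local Open Scope ring_scope.

(* Inverses of the structure isomorphisms are
   included as data; the isomorphism equations are axioms below. *)
Record cat_data (K : fieldType) := CatData {
  obj : Type;
  Mor : obj -> obj -> vectType K;
  idm : forall a : obj, Mor a a;
  comp : forall a b c : obj, Mor b c -> Mor a b -> Mor a c;
  tens : obj -> obj -> obj;
  tensm : forall a b c d : obj, Mor a b -> Mor c d -> Mor (tens a c) (tens b d);
  tunit : obj;
  assoc : forall a b c : obj, Mor (tens (tens a b) c) (tens a (tens b c));
  assoc_inv : forall a b c : obj, Mor (tens a (tens b c)) (tens (tens a b) c);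
  lunit : forall a : obj, Mor (tens tunit a) a;
  lunit_inv : forall a : obj, Mor a (tens tunit a);
  runit : forall a : obj, Mor (tens a tunit) a;
  runit_inv : forall a : obj, Mor a (tens a tunit);
  braid : forall a b : obj, Mor (tens a b) (tens b a);
  braid_inv : forall a b : obj, Mor (tens b a) (tens a b);
  dual : obj -> obj;
  ev : forall a : obj, Mor (tens (dual a) a) tunit;
  coev : forall a : obj, Mor tunit (tens a (dual a));
  twist : forall a : obj, Mor a a;
  twist_inv : forall a : obj, Mor a a
}.

Arguments idm {K M} a : rename.
Arguments comp {K M a b c} : rename.
Arguments tens {K M} : rename.
Arguments tensm {K M a b c d} : rename.
Arguments tunit {K M} : rename.
Arguments assoc {K M} a b c : rename.
Arguments assoc_inv {K M} a b c : rename.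
Arguments lunit {K M} a : rename.
Arguments lunit_inv {K M} a : rename.
Arguments runit {K M} a : rename.
Arguments runit_inv {K M} a : rename.
Arguments braid {K M} a b : rename.
Arguments braid_inv {K M} a b : rename.
Arguments dual {K M} : rename.
Arguments ev {K M} a : rename.
Arguments coev {K M} a : rename.
Arguments twist {K M} a : rename.
Arguments twist_inv {K M} a : rename.

Declare Scope cat_scope.
Delimit Scope cat_scope with cat.
Notation "g \oc f" := (comp g f) (at level 45, left associativity) : cat_scope.
Notation "a (x) b" := (tens a b) (at level 40, left associativity) : cat_scope.
Notation "f <x> g" := (tensm f g) (at level 40, left associativity) : cat_scope.
Local Open Scope cat_scope.

Section Defs.
Variable K : fieldType.
Variable M : cat_data K.
Local Notation obj := (obj M).
Local Notation Mor := (@Mor K M).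

Definition is_iso (a b : obj) (f : Mor a b) : Prop :=
  exists g : Mor b a, g \oc f = idm a /\ f \oc g = idm b.

Definition isomorphic (a b : obj) : Prop := exists f : Mor a b, is_iso f.

Definition simple (a : obj) : Prop :=
  idm a != 0 /\ forall f : Mor a a, exists c : K, f = c *: idm a.

Definition dual_endo (a : obj) (f : Mor a a) : Mor (dual a) (dual a) :=
  lunit (dual a) \oc (ev a <x> idm (dual a))
  \oc ((idm (dual a) <x> f) <x> idm (dual a))
  \oc assoc_inv (dual a) a (dual a) \oc (idm (dual a) <x> coev a)
  \oc runit_inv (dual a).

(* right evaluation induced by the ribbon structure *)
Definition rev (a : obj) : Mor (a (x) dual a) tunit :=
  ev a \oc braid a (dual a) \oc (twist a <x> idm (dual a)).

Definition qtr (a : obj) (f : Mor a a) : Mor tunit tunit :=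
  rev a \oc (f <x> idm (dual a)) \oc coev a.

Definition category_axioms : Prop :=
  (forall a b c d (f : Mor a b) (g : Mor b c) (h : Mor c d),
       h \oc (g \oc f) = (h \oc g) \oc f) /\
  (forall a b (f : Mor a b), idm b \oc f = f /\ f \oc idm a = f) /\
  (forall a b c (k : K) (g : Mor b c) (f1 f2 : Mor a b),
       g \oc (k *: f1 + f2) = k *: (g \oc f1) + g \oc f2) /\
  (forall a b c (k : K) (g1 g2 : Mor b c) (f : Mor a b),
       (k *: g1 + g2) \oc f = k *: (g1 \oc f) + g2 \oc f).

Definition tensor_functor_axioms : Prop :=
  (forall a b c d (k : K) (f1 f2 : Mor a b) (g : Mor c d),
      (k *: f1 + f2) <x> g = k *: (f1 <x> g) + (f2 <x> g)) /\
  (forall a b c d (k : K) (f : Mor a b) (g1 g2 : Mor c d),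
      f <x> (k *: g1 + g2) = k *: (f <x> g1) + (f <x> g2)) /\
  (forall a b : obj, idm a <x> idm b = idm (a (x) b)) /\
  (forall a b c a' b' c' (f : Mor a b) (g : Mor b c)
          (f' : Mor a' b') (g' : Mor b' c'),
      (g \oc f) <x> (g' \oc f') = (g <x> g') \oc (f <x> f')).

Definition structure_iso_axioms : Prop :=
  (forall a b c : obj, assoc_inv a b c \oc assoc a b c = idm _ /\
                 assoc a b c \oc assoc_inv a b c = idm _) /\
  (forall a : obj, lunit_inv a \oc lunit a = idm _ /\ lunit a \oc lunit_inv a = idm _) /\
  (forall a : obj, runit_inv a \oc runit a = idm _ /\ runit a \oc runit_inv a = idm _) /\
  (forall a b : obj, braid_inv a b \oc braid a b = idm _ /\
               braid a b \oc braid_inv a b = idm _) /\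
  (forall a : obj, twist_inv a \oc twist a = idm _ /\ twist a \oc twist_inv a = idm _).

Definition naturality_axioms : Prop :=
  (forall a b c a' b' c' (f : Mor a a') (g : Mor b b') (h : Mor c c'),
      assoc a' b' c' \oc ((f <x> g) <x> h) = (f <x> (g <x> h)) \oc assoc a b c) /\
  (forall a b (f : Mor a b), lunit b \oc (idm tunit <x> f) = f \oc lunit a) /\
  (forall a b (f : Mor a b), runit b \oc (f <x> idm tunit) = f \oc runit a) /\
  (forall a b a' b' (f : Mor a a') (g : Mor b b'),
      braid a' b' \oc (f <x> g) = (g <x> f) \oc braid a b) /\
  (forall a b (f : Mor a b), twist b \oc f = f \oc twist a).

Definition coherence_axioms : Prop :=
  (forall a b c d : obj,
      assoc a b (c (x) d) \oc assoc (a (x) b) c d =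
      (idm a <x> assoc b c d) \oc assoc a (b (x) c) d
        \oc (assoc a b c <x> idm d)) /\
  (forall a b : obj,
      (idm a <x> lunit b) \oc assoc a tunit b = runit a <x> idm b) /\
  (forall a b c : obj,
      assoc b c a \oc braid a (b (x) c) \oc assoc a b c =
      (idm b <x> braid a c) \oc assoc b a c \oc (braid a b <x> idm c)) /\
  (forall a b c : obj,
      assoc_inv c a b \oc braid (a (x) b) c \oc assoc_inv a b c =
      (braid a c <x> idm b) \oc assoc_inv a c b \oc (idm a <x> braid b c)).

Definition rigidity_axioms : Prop :=
  forall a : obj,
    (idm a <x> ev a) \oc assoc a (dual a) a \oc (coev a <x> idm a) =
    runit_inv a \oc lunit a /\
    (ev a <x> idm (dual a)) \oc assoc_inv (dual a) a (dual a)
      \oc (idm (dual a) <x> coev a) =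
    lunit_inv (dual a) \oc runit (dual a).

Definition twist_axioms : Prop :=
  (forall a b : obj, twist (a (x) b) =
               braid b a \oc braid a b \oc (twist a <x> twist b)) /\
  (forall a : obj, dual_endo (twist a) = twist (dual a)).

Definition ribbon_axioms : Prop :=
  category_axioms /\ tensor_functor_axioms /\ structure_iso_axioms /\
  naturality_axioms /\ coherence_axioms /\ rigidity_axioms /\ twist_axioms.

Definition semisimple : Prop :=
  forall a : obj, exists (n : nat) (s : 'I_n -> obj)
    (p : forall i, Mor a (s i)) (q : forall i, Mor (s i) a),
    [/\ (forall i, simple (s i)),
        (forall i, p i \oc q i = idm (s i)),
        (forall i j, i != j -> p i \oc q j = 0) &
        \sum_(i < n) (q i \oc p i) = idm a].

Definition modular : Prop :=
  [/\ ribbon_axioms, semisimple, simple tunit &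
   (exists (n : nat) (s : 'I_n -> obj),
     [/\ (forall i, simple (s i)),
         (forall i j, isomorphic (s i) (s j) -> i = j),
         (forall x, simple x -> exists i, isomorphic x (s i)) &
         exists S : 'M[K]_n,
           (forall i j, qtr (braid (s j) (s i) \oc braid (s i) (s j))
                        = S i j *: idm tunit)
           /\ S \in unitmx])].

Definition pre_clifford (V : obj) (iota : Mor (V (x) V) tunit) : Prop :=
  [/\ modular, is_iso iota & twist V = - idm V].

End Defs.

(* Both [th \oc (idm V <x> th) \oc assoc V V X] and
   [lunit X \oc (iota <x> idm X)] are isomorphisms (V (x) V) (x) X -> X, so by
   simplicity of X they differ by a nonzero scalar c.  Replacing an arbitrary
   isomorphism th by k *: th multiplies the first one by k^2, and over the
   algebraically closed field C we can choose k with k^2 = -1/c. *)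
From HB Require Import structures.
From mathcomp Require Import all_boot all_order all_algebra.
From mathcomp Require Import complex.
From mathcomp Require Import reals.
Import Order.TTheory GRing.Theory Num.Theory.
Local Open Scope ring_scope.
Local Open Scope cat_scope.

Section LinearCategory.
Context {K : fieldType} {M : cat_data K}.
Local Notation Mor := (@Mor K M).
Hypothesis Hcat : category_axioms M.
Hypothesis Hten : tensor_functor_axioms M.

Lemma compA {a b c d : obj M} (f : Mor a b) (g : Mor b c) (h : Mor c d) :
  h \oc (g \oc f) = (h \oc g) \oc f.
Proof. by case: Hcat. Qed.

Lemma comp1m {a b : obj M} (f : Mor a b) : idm b \oc f = f.
Proof. by case: Hcat => _ [/(_ a b f) []]. Qed.

Lemma compm1 {a b : obj M} (f : Mor a b) : f \oc idm a = f.
Proof. by case: Hcat => _ [/(_ a b f) []]. Qed.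

Lemma compm0 {a b c : obj M} (g : Mor b c) : g \oc (0 : Mor a b) = 0.
Proof.
case: Hcat => _ [_ [/(_ a b c (-1) g 0 0) + _]].
by rewrite scaler0 addr0 scaleN1r addNr.
Qed.

Lemma comp0m {a b c : obj M} (f : Mor a b) : (0 : Mor b c) \oc f = 0.
Proof.
case: Hcat => _ [_ [_ /(_ a b c (-1) 0 0 f)]].
by rewrite scaler0 addr0 scaleN1r addNr.
Qed.

Lemma compmZ {a b c : obj M} (k : K) (g : Mor b c) (f : Mor a b) :
  g \oc (k *: f) = k *: (g \oc f).
Proof.
case: Hcat => _ [_ [/(_ a b c k g f 0) + _]].
by rewrite addr0 compm0 addr0.
Qed.

Lemma compZm {a b c : obj M} (k : K) (g : Mor b c) (f : Mor a b) :
  (k *: g) \oc f = k *: (g \oc f).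
Proof.
case: Hcat => _ [_ [_ /(_ a b c k g 0 f)]].
by rewrite addr0 comp0m addr0.
Qed.

Lemma tensm0 {a b c d : obj M} (f : Mor a b) : f <x> (0 : Mor c d) = 0.
Proof.
case: Hten => _ [/(_ a b c d (-1) f 0 0) + _].
by rewrite scaler0 addr0 scaleN1r addNr.
Qed.

Lemma tensmZ {a b c d : obj M} (k : K) (f : Mor a b) (g : Mor c d) :
  f <x> (k *: g) = k *: (f <x> g).
Proof.
case: Hten => _ [/(_ a b c d k f g 0) + _].
by rewrite addr0 tensm0 addr0.
Qed.

Lemma is_iso_idm (a : obj M) : is_iso (idm a).
Proof. by exists (idm a); rewrite comp1m. Qed.

Lemma is_iso_comp {a b c : obj M} (f : Mor a b) (g : Mor b c) :
  is_iso f -> is_iso g -> is_iso (g \oc f).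
Proof.
move=> [f' [f'f ff']] [g' [g'g gg']]; exists (f' \oc g'); split.
  by rewrite compA -(compA g g' f') g'g compm1 f'f.
by rewrite compA -(compA f' f g) ff' compm1 gg'.
Qed.

Lemma is_iso_tensm {a b c d : obj M} (f : Mor a b) (g : Mor c d) :
  is_iso f -> is_iso g -> is_iso (f <x> g).
Proof.
case: Hten => _ [_ [tensm11 tensm_comp]].
move=> [f' [f'f ff']] [g' [g'g gg']]; exists (f' <x> g').
by rewrite -!tensm_comp f'f ff' g'g gg' !tensm11.
Qed.

Lemma is_isoZ {a b : obj M} (k : K) (f : Mor a b) :
  k != 0 -> is_iso f -> is_iso (k *: f).
Proof.
move=> k0 [f' [f'f ff']]; exists (k^-1 *: f').
by rewrite !compZm !compmZ !scalerA mulVf // mulfV // !scale1r.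
Qed.

Lemma simple_iso_proportional {a x : obj M} {g h : Mor a x} :
  simple x -> is_iso g -> is_iso h -> exists2 c : K, c != 0 & g = c *: h.
Proof.
move=> [x0 endo_scalar] [g' [_ gg']] [h' [h'h _]].
have [c gh'] := endo_scalar (g \oc h').
have g_ch : g = c *: h by rewrite -[g]compm1 -h'h compA gh' compZm comp1m.
exists c => //; apply: contraNneq x0 => c0.
by rewrite -gg' g_ch c0 scale0r comp0m.
Qed.

Section DoubleAction.
Context {V X : obj M}.

Definition double_action (th : Mor (V (x) X) X) : Mor ((V (x) V) (x) X) X :=
  th \oc (idm V <x> th) \oc assoc V V X.

Lemma double_actionZ (k : K) (th : Mor (V (x) X) X) :
  double_action (k *: th) = k ^+ 2 *: double_action th.
Proof. by rewrite /double_action tensmZ compmZ !compZm scalerA -expr2. Qed.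

Lemma is_iso_double_action {th : Mor (V (x) X) X} :
  is_iso (assoc V V X) -> is_iso th -> is_iso (double_action th).
Proof.
move=> iso_assoc iso_th.
by do 2![apply: is_iso_comp => //]; apply: is_iso_tensm => //; apply: is_iso_idm.
Qed.

End DoubleAction.
End LinearCategory.

Theorem mainTheorem8 (R : realType) (M : cat_data (R[i])%C)
    (V : obj M) (iota : Mor (V (x) V) tunit)
    (HC : pre_clifford iota)
    (X : obj M) (HX : simple X) (HVX : isomorphic (V (x) X) X) :
  exists th : Mor (V (x) X) X,
    is_iso th /\
    - (th \oc (idm V <x> th) \oc assoc V V X) = lunit X \oc (iota <x> idm X).
Proof.
have [[[Hcat [Hten [[Has [Hlu _]] _]]] _ _ _] iso_iota _] := HC.
have [f iso_f] := HVX.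
have iso_assoc : is_iso (assoc V V X) by exists (assoc_inv V V X); apply: Has.
have iso_rhs : is_iso (lunit X \oc (iota <x> idm X)).
  apply: is_iso_comp => //; last by exists (lunit_inv X); apply: Hlu.
  by apply: is_iso_tensm => //; apply: is_iso_idm.
have [c c0 fc] := simple_iso_proportional Hcat HX
  (is_iso_double_action Hcat Hten iso_assoc iso_f) iso_rhs.
pose k := sqrtC (- c^-1).
have k2 : k ^+ 2 = - c^-1 by rewrite sqrtCK.
have k0 : k != 0 by rewrite -sqrf_eq0 k2 oppr_eq0 invr_eq0.
exists (k *: f); split; first exact: is_isoZ.
rewrite -/(double_action _) (double_actionZ Hcat Hten) fc scalerA k2.
rewrite mulNr mulVf // scaleN1r opprK; reflexivity.
Qed.
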